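(* Let $n \geq 2$ and let $(x_i, y_i)_{i=1}^n$ be labeled examples with $x_i \in \mathbb{R}^d$, $y_i \in \{-1,+1\}$ and $\max_i \|x_i\| \leq 1$. Let $X = [x_1,\dots,x_n] \in \mathbb{R}^{d\times n}$ and let $\sigma^2$ satisfy $\sigma^2 \geq \frac{1}{n}\|X\|^2$ (spectral norm). For $b \in \{1,\dots,n\}$ set $\beta_b := 1 + \frac{(b-1)(n\sigma^2-1)}{n-1}$. For $w \in \mathbb{R}^d$ and $A \subseteq \{1,\dots,n\}$ with $|A| = b$ define $$\nabla \hat{L}_A(w) := -\frac{1}{b}\sum_{i\in A} \chi_i(w)\, y_i x_i,$$ where $\chi_i(w) = 1$ if $y_i\langle w, x_i\rangle < 1$ and $\chi_i(w)=0$ otherwise. Then for every $w \in \mathbb{R}^d$, if $A$ is drawn uniformly at random among all subsets of $\{1,\dots,n\}$ of cardinality $b$, $$\mathbb{E}\big[\|\nabla \hat{L}_A(w)\|^2\big] \leq \frac{\beta_b}{b}.$$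
   Context: $\nabla \hat{L}_A(w)$ is a subgradient of the average hinge loss $\hat{L}_A(w) = \frac{1}{b}\sum_{i\in A}\max\{0, 1 - y_i\langle w, x_i\rangle\}$. $\|X\|$ is the spectral norm of $X$. *)

From HB Require Import structures.
From mathcomp Require Import all_boot all_order all_algebra.
From mathcomp Require Import classical_sets reals.
Set Implicit Arguments. Unset Strict Implicit. Unset Printing Implicit Defensive.
Import Order.TTheory GRing.Theory Num.Theory.
Local Open Scope ring_scope.
Local Open Scope classical_set_scope.

Definition dotv {R : pzRingType} {d : nat} (u v : 'cV[R]_d) : R :=
  \sum_(k < d) u k 0 * v k 0.

Definition normv {R : rcfType} {d : nat} (u : 'cV[R]_d) : R :=
  Num.sqrt (dotv u u).

Definition spectral_norm {R : realType} {d n : nat} (X : 'M[R]_(d, n)) : R :=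
  sup [set normv (X *m v) | v in [set v : 'cV[R]_n | normv v <= 1]].

Definition chi {R : realType} {d n : nat} (X : 'M[R]_(d, n)) (y : 'I_n -> R)
  (w : 'cV[R]_d) (i : 'I_n) : R :=
  if y i * dotv w (col i X) < 1 then 1 else 0.

Definition grad_hinge {R : realType} {d n : nat} (X : 'M[R]_(d, n))
  (y : 'I_n -> R) (w : 'cV[R]_d) (b : nat) (A : {set 'I_n}) : 'cV[R]_d :=
  - ((b%:R)^-1 *: \sum_(i in A) ((chi X y w i * y i) *: col i X)).

Definition unif_subset_expect {R : realType} {n : nat} (b : nat)
  (f : {set 'I_n} -> R) : R :=
  (#|[set A : {set 'I_n} | #|A| == b]|%:R)^-1 *
    \sum_(A : {set 'I_n} | #|A| == b) f A.

Definition beta_b {R : realType} (n b : nat) (sigma2 : R) : R :=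
  1 + ((b%:R - 1) * (n%:R * sigma2 - 1)) / (n%:R - 1).

(* Write g_i = chi_i y_i x_i, so that |grad_A|^2 = b^-2 sum_(i, j in A) <g_i, g_j>.
   Every permutation of {1..n} preserves the uniform law on b-subsets, hence
   P(i in A) = b/n and P(i, j in A) = b(b-1)/(n(n-1)) for i <> j, and the
   expectation is a nonnegative combination of sum_(i,j) <g_i, g_j> = |X c|^2
   <= n |X|^2 <= n^2 sigma^2 (as |c_i| <= 1) and of sum_i |g_i|^2 <= n.
   With these two bounds the combination is exactly beta_b / b. *)

From HB Require Import structures.
From mathcomp Require Import all_boot all_order all_algebra all_fingroup.
From mathcomp Require Import classical_sets reals ring lra.
Import Order.TTheory GRing.Theory Num.Theory.
Local Open Scope ring_scope.

(* [unif_subset_expect] normalizes by the cardinal of a classical-set comprehension. *)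
Lemma card_classical_set (T : finType) (P : pred T) :
  #|[set x | P x]%classic| = #|[set x | P x]|.
Proof. by apply: eq_card => x; rewrite inE; apply/idP/idP; rewrite in_setE. Qed.

Lemma eq_unif_subset_expect (R : realType) (n b : nat) (f g : {set 'I_n} -> R) :
  (forall A, f A = g A) -> unif_subset_expect b f = unif_subset_expect b g.
Proof. by move=> efg; rewrite /unif_subset_expect; under eq_bigr do rewrite efg. Qed.

Lemma unif_subset_expectZ (R : realType) (n b : nat) (c : R) (f : {set 'I_n} -> R) :
  unif_subset_expect b (fun A => c * f A) = c * unif_subset_expect b f.
Proof. by rewrite /unif_subset_expect -mulr_sumr mulrCA. Qed.

Section PairInclusion.
Variables (R : realType) (n b : nat).

Definition subset_count : R := #|[set A : {set 'I_n} | #|A| == b]|%:R.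

Definition pair_count (i j : 'I_n) : R :=
  \sum_(A : {set 'I_n} | #|A| == b) ((i \in A) && (j \in A))%:R.

Definition incl_prob : R := b%:R / n%:R.

Definition pair_incl_prob : R := b%:R * (b%:R - 1) / (n%:R * (n%:R - 1)).

Lemma pair_count_perm (s : {perm 'I_n}) i j :
  pair_count (s i) (s j) = pair_count i j.
Proof.
rewrite /pair_count (reindex_inj (imset_inj (@perm_inj _ s))) /=.
apply: eq_big => [A|A _]; first by rewrite card_imset //; exact: perm_inj.
by rewrite !mem_imset //; exact: perm_inj.
Qed.

Lemma pair_count_diag_eq i i' : pair_count i i = pair_count i' i'.
Proof. by rewrite -(pair_count_perm (tperm i i')) tpermL. Qed.

Lemma pair_count_offdiag_eq i j i' j' :
  i != j -> i' != j' -> pair_count i j = pair_count i' j'.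
Proof.
move=> hij hij'; rewrite -(pair_count_perm (tperm i i')) tpermL.
set t := tperm i i' j.
have ht : i' != t.
  by rewrite /t -{1}(tpermL i i'); apply/eqP => /perm_inj /eqP; rewrite (negPf hij).
by rewrite -(pair_count_perm (tperm j' t)) tpermR tpermD // eq_sym.
Qed.

Lemma sum_pair_count_split (F : 'I_n -> 'I_n -> R) (i0 i1 : 'I_n) : i0 != i1 ->
  \sum_i \sum_j pair_count i j * F i j =
  pair_count i0 i1 * \sum_i \sum_j F i j
  + (pair_count i0 i0 - pair_count i0 i1) * \sum_i F i i.
Proof.
move=> h01; rewrite !mulr_sumr -big_split /=; apply: eq_bigr => i _.
rewrite mulr_sumr (bigD1 i) //= [in RHS](bigD1 i) //= (pair_count_diag_eq i i0).
rewrite [RHS]addrAC -mulrDl [_ + (_ - _)]addrC subrK; congr (_ + _).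
by apply: eq_bigr => j hj; rewrite (pair_count_offdiag_eq i j i0 i1) // eq_sym.
Qed.

Lemma sum_bsets_pairs (F : 'I_n -> 'I_n -> R) :
  \sum_(A : {set 'I_n} | #|A| == b)
    \sum_i \sum_j ((i \in A) && (j \in A))%:R * F i j
  = \sum_i \sum_j pair_count i j * F i j.
Proof.
rewrite exchange_big /=; apply: eq_bigr => i _.
by rewrite exchange_big /=; apply: eq_bigr => j _; rewrite mulr_suml.
Qed.

Lemma sum_bsets_const (c : R) :
  \sum_(A : {set 'I_n} | #|A| == b) c = c * subset_count.
Proof. by rewrite mulr_natr -sumr_const; apply: eq_bigl => A; rewrite inE. Qed.

Lemma sum_mem_card (A : {set 'I_n}) : \sum_i ((i \in A)%:R : R) = #|A|%:R.
Proof.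
by rewrite -sumr_const [RHS]big_mkcond; apply: eq_bigr => i _; case: (i \in A).
Qed.

Lemma subset_count_gt0 : (b <= n)%N -> 0 < subset_count.
Proof. by move=> hbn; rewrite /subset_count card_draws card_ord ltr0n bin_gt0. Qed.

Hypothesis n_gt1 : (1 < n)%N.

Let i0 : 'I_n := Ordinal (ltnW n_gt1).
Let i1 : 'I_n := Ordinal n_gt1.
Let i0_neq_i1 : i0 != i1. Proof. by []. Qed.
Let n_neq0 : (n%:R : R) != 0. Proof. by rewrite pnatr_eq0 -lt0n ltnW. Qed.
Let n1_neq0 : (n%:R : R) - 1 != 0. Proof. by rewrite subr_eq0 pnatr_eq1 gtn_eqF. Qed.
Let sum1 : \sum_(k < n) (1 : R) = n%:R. Proof. by rewrite sumr_const card_ord. Qed.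

Lemma pair_count_diag i : pair_count i i = incl_prob * subset_count.
Proof.
have hsum : n%:R * pair_count i i = b%:R * subset_count.
  have -> : n%:R * pair_count i i = \sum_j pair_count j j.
    rewrite (eq_bigr (fun _ => pair_count i i)) ?sumr_const ?card_ord ?mulr_natl //.
    by move=> j _; apply: pair_count_diag_eq.
  rewrite /pair_count exchange_big /= -sum_bsets_const.
  apply: eq_bigr => A /eqP <-.
  by rewrite -sum_mem_card; apply: eq_bigr => j _; rewrite andbb.
by apply: (mulfI n_neq0); rewrite hsum /incl_prob; field.
Qed.

Lemma pair_count_offdiag i j : i != j -> pair_count i j = pair_incl_prob * subset_count.
Proof.
move=> hij; rewrite (pair_count_offdiag_eq i j i0 i1 hij i0_neq_i1).
(* Count triples (A, k, l) with k, l in A: this is sum_pair_count_split at F = 1. *)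
have hsq : \sum_i \sum_j pair_count i j * 1 = b%:R * b%:R * subset_count.
  rewrite -sum_bsets_pairs -sum_bsets_const; apply: eq_bigr => A /eqP <-.
  rewrite -sum_mem_card mulr_suml; apply: eq_bigr => k _.
  rewrite mulr_sumr; apply: eq_bigr => l _.
  by case: (k \in A); case: (l \in A); rewrite ?mulr1 ?mulr0 ?mul0r.
rewrite (sum_pair_count_split _ _ _ i0_neq_i1) (pair_count_diag i0) sum1 in hsq.
rewrite (eq_bigr (fun _ => n%:R)) // sumr_const card_ord ?mulr1 -[n%:R *+ n]mulr_natl in hsq.
apply/eqP; rewrite -subr_eq0; apply/eqP.
have -> : pair_count i0 i1 - pair_incl_prob * subset_count =
    (pair_count i0 i1 * (n%:R * n%:R)
     + (incl_prob * subset_count - pair_count i0 i1) * n%:R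
     - b%:R * b%:R * subset_count) / (n%:R * (n%:R - 1)).
  by rewrite /incl_prob /pair_incl_prob; field; rewrite n_neq0 n1_neq0.
by rewrite hsq subrr mul0r.
Qed.

Lemma unif_subset_expect_pairs (F : 'I_n -> 'I_n -> R) : (b <= n)%N ->
  unif_subset_expect b (fun A => \sum_i \sum_j ((i \in A) && (j \in A))%:R * F i j)
  = pair_incl_prob * \sum_i \sum_j F i j + (incl_prob - pair_incl_prob) * \sum_i F i i.
Proof.
move=> hbn; rewrite /unif_subset_expect card_classical_set -/subset_count.
rewrite sum_bsets_pairs (sum_pair_count_split _ _ _ i0_neq_i1) pair_count_diag.
rewrite pair_count_offdiag //.
have := subset_count_gt0 hbn; rewrite lt0r => /andP [N0 _].
by field.
Qed.

Lemma pair_incl_combination_le (S T s : R) : (1 <= b <= n)%N ->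
  S <= n%:R ^+ 2 * s -> T <= n%:R ->
  (b%:R ^+ 2)^-1 * (pair_incl_prob * S + (incl_prob - pair_incl_prob) * T)
  <= beta_b n b s / b%:R.
Proof.
move=> /andP [hb1 hbn] hS hT.
have n_gt1R : 1 < (n%:R : R) by rewrite ltr1n.
have b_ge1 : 1 <= (b%:R : R) by rewrite ler1n.
have b_le_n : (b%:R : R) <= n%:R by rewrite ler_nat.
have b_neq0 : (b%:R : R) != 0 by rewrite pnatr_eq0 -lt0n.
have p_ge0 : 0 <= pair_incl_prob by apply: divr_ge0; apply: mulr_ge0; lra.
have q_ge0 : 0 <= incl_prob - pair_incl_prob.
  have -> : incl_prob - pair_incl_prob = b%:R * (n%:R - b%:R) / (n%:R * (n%:R - 1)).
    by rewrite /incl_prob /pair_incl_prob; field; rewrite ?n_neq0 ?n1_neq0.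
  by apply: divr_ge0; apply: mulr_ge0; lra.
apply: le_trans (_ : _ <= (b%:R ^+ 2)^-1 *
  (pair_incl_prob * (n%:R ^+ 2 * s) + (incl_prob - pair_incl_prob) * n%:R)) _.
  by rewrite ler_wpM2l ?invr_ge0 ?exprn_ge0 ?ler0n // lerD // ler_wpM2l.
rewrite [leLHS](_ : _ = beta_b n b s / b%:R) //.
by rewrite /beta_b /incl_prob /pair_incl_prob; field; rewrite b_neq0 n1_neq0 n_neq0.
Qed.

End PairInclusion.

Lemma mulmx_sum_col (R : comPzSemiRingType) (m n : nat) (A : 'M[R]_(m, n)) (v : 'cV_n) :
  A *m v = \sum_i v i 0 *: col i A.
Proof.
apply/matrixP => k l; rewrite summxE !mxE; apply: eq_bigr => i _.
by rewrite !mxE ord1 mulrC.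
Qed.

Section Euclidean.
Context {R : rcfType} {d : nat}.
Implicit Types u v : 'cV[R]_d.

Lemma dotvC u v : dotv u v = dotv v u.
Proof. by apply: eq_bigr => k _; rewrite mulrC. Qed.

Lemma dotvZl (c : R) u v : dotv (c *: u) v = c * dotv u v.
Proof. by rewrite /dotv mulr_sumr; apply: eq_bigr => k _; rewrite mxE mulrA. Qed.

Lemma dotvNl u v : dotv (- u) v = - dotv u v.
Proof. by rewrite -scaleN1r dotvZl mulN1r. Qed.

Lemma dotv_suml (I : finType) (P : pred I) (g : I -> 'cV[R]_d) v :
  dotv (\sum_(i | P i) g i) v = \sum_(i | P i) dotv (g i) v.
Proof.
by rewrite /dotv; under eq_bigr do rewrite summxE mulr_suml; rewrite exchange_big.
Qed.

Lemma dotv_sum_mem (I : finType) (A : {set I}) (g : I -> 'cV[R]_d) :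
  dotv (\sum_(i in A) g i) (\sum_(i in A) g i)
  = \sum_i \sum_j ((i \in A) && (j \in A))%:R * dotv (g i) (g j).
Proof.
rewrite dotv_suml big_mkcond /=; apply: eq_bigr => i _.
rewrite dotvC dotv_suml big_mkcond /=.
case: (i \in A); last by rewrite big1 // => j _; rewrite mul0r.
by apply: eq_bigr => j _; case: (j \in A); rewrite ?mul1r ?mul0r // dotvC.
Qed.

Lemma dotv_ge0 u : 0 <= dotv u u.
Proof. by apply: sumr_ge0 => k _; rewrite -expr2 sqr_ge0. Qed.

Lemma normv_ge0 u : 0 <= normv u.
Proof. exact: sqrtr_ge0. Qed.

Lemma normv0 : normv (0 : 'cV[R]_d) = 0.
Proof. by rewrite /normv /dotv big1 ?sqrtr0 // => k _; rewrite mxE mul0r. Qed.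

Lemma normv_sqr u : normv u ^+ 2 = dotv u u.
Proof. by rewrite /normv sqr_sqrtr // dotv_ge0. Qed.

Lemma normvZ (c : R) u : normv (c *: u) = `|c| * normv u.
Proof.
by rewrite /normv dotvZl dotvC dotvZl mulrA -expr2 sqrtrM ?sqr_ge0 // sqrtr_sqr.
Qed.

Lemma abs_entry_le_normv u k : `|u k 0| <= normv u.
Proof.
rewrite -sqrtr_sqr ler_sqrt ?dotv_ge0 // /dotv (bigD1 k) //= -expr2 lerDl.
by apply: sumr_ge0 => j _; rewrite -expr2 sqr_ge0.
Qed.

End Euclidean.

Section SpectralNorm.
Context {R : realType} {d n : nat}.
Variable X : 'M[R]_(d, n).

Lemma spectral_norm_has_sup :
  has_sup [set normv (X *m v) | v in [set v : 'cV[R]_n | normv v <= 1]]%classic.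
Proof.
split; first by exists (normv (X *m 0)), 0 => //=; rewrite normv0.
pose a k := \sum_j `|X k j|.
exists (Num.sqrt (\sum_k a k ^+ 2)) => _ [v hv <-].
rewrite /normv ler_sqrt; last by apply: sumr_ge0 => k _; rewrite sqr_ge0.
apply: ler_sum => k _; rewrite mxE expr2.
have : `|\sum_j X k j * v j 0| <= a k.
  apply: le_trans (ler_norm_sum _ _ _) _; apply: ler_sum => j _.
  rewrite normrM -[leRHS]mulr1 ler_wpM2l //.
  exact: le_trans (abs_entry_le_normv v j) hv.
rewrite ler_norml => /andP [? ?]; nra.
Qed.

Lemma normv_mulmx_le1 v : normv v <= 1 -> normv (X *m v) <= spectral_norm X.
Proof. by move=> hv; apply: sup_upper_bound spectral_norm_has_sup _ _; exists v. Qed.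

Lemma spectral_norm_ge0 : 0 <= spectral_norm X.
Proof. by apply: le_trans (normv_mulmx_le1 0 _); rewrite ?normv_ge0 ?normv0. Qed.

Lemma normv_mulmx_le v : normv (X *m v) <= spectral_norm X * normv v.
Proof.
have [v0|vn0] := eqVneq (normv v) 0.
  have -> : v = 0.
    apply/matrixP => k l; rewrite ord1 mxE; apply/eqP.
    by rewrite -normr_le0 -v0 abs_entry_le_normv.
  by rewrite mulmx0 !normv0 mulr0.
have v_gt0 : 0 < normv v by rewrite lt_def vn0 normv_ge0.
have hv : normv ((normv v)^-1 *: v) <= 1.
  by rewrite normvZ ger0_norm ?invr_ge0 ?normv_ge0 // mulVf.
move: (normv_mulmx_le1 _ hv).
by rewrite -scalemxAr normvZ ger0_norm ?invr_ge0 ?normv_ge0 // mulrC ler_pdivrMr.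
Qed.

Lemma sum_dotv_scaled_cols (c : 'I_n -> R) : (forall i, c i ^+ 2 <= 1) ->
  \sum_i \sum_j dotv (c i *: col i X) (c j *: col j X) <= n%:R * spectral_norm X ^+ 2.
Proof.
move=> c_le1; pose v : 'cV[R]_n := \col_i c i.
have -> : \sum_i \sum_j dotv (c i *: col i X) (c j *: col j X) = normv (X *m v) ^+ 2.
  rewrite normv_sqr mulmx_sum_col dotv_suml; apply: eq_bigr => i _.
  rewrite dotvC dotv_suml; apply: eq_bigr => j _.
  by rewrite !mxE dotvC.
have v_le : normv v ^+ 2 <= n%:R.
  rewrite normv_sqr -[n in n%:R]card_ord -sumr_const.
  by apply: ler_sum => i _; rewrite mxE -expr2.
have Xv_le : normv (X *m v) ^+ 2 <= (spectral_norm X * normv v) ^+ 2.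
  by rewrite ler_sqr ?normv_mulmx_le ?nnegrE ?mulr_ge0 ?normv_ge0 ?spectral_norm_ge0.
have S_ge0 : 0 <= spectral_norm X ^+ 2 by rewrite sqr_ge0.
by apply: le_trans Xv_le _; rewrite exprMn mulrC ler_wpM2r.
Qed.

Lemma sum_dotv_scaled_cols_diag (c : 'I_n -> R) : (forall i, c i ^+ 2 <= 1) ->
  (forall i, normv (col i X) <= 1) ->
  \sum_i dotv (c i *: col i X) (c i *: col i X) <= n%:R.
Proof.
move=> c_le1 X_le1; rewrite -[n in n%:R]card_ord -sumr_const.
apply: ler_sum => i _; rewrite dotvZl dotvC dotvZl mulrA -expr2 -normv_sqr.
by apply: mulr_ile1; rewrite ?sqr_ge0 ?c_le1 ?exprn_ile1 ?normv_ge0.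
Qed.

End SpectralNorm.

Theorem lemma2 (R : realType) (d n : nat) (X : 'M[R]_(d, n)) (y : 'I_n -> R)
  (sigma2 : R) (b : nat) (w : 'cV[R]_d) :
  (2 <= n)%N ->
  (forall i : 'I_n, y i = 1 \/ y i = -1) ->
  (forall i : 'I_n, normv (col i X) <= 1) ->
  spectral_norm X ^+ 2 / n%:R <= sigma2 ->
  (1 <= b <= n)%N ->
  unif_subset_expect b (fun A => normv (grad_hinge X y w b A) ^+ 2)
    <= beta_b n b sigma2 / b%:R.
Proof.
move=> n_ge2 y_sign X_le1 X_sigma b_range.
have n_gt0 : (0 < n%:R :> R) by rewrite ltr0n ltnW.
pose c i := chi X y w i * y i.
have c_le1 i : c i ^+ 2 <= 1.
  by rewrite /c /chi; case: ifP => _; case: (y_sign i) => ->; rewrite ?expr2; lra.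
have grad_sqr A : normv (grad_hinge X y w b A) ^+ 2 = (b%:R ^+ 2)^-1 *
    \sum_i \sum_j ((i \in A) && (j \in A))%:R * dotv (c i *: col i X) (c j *: col j X).
  rewrite normv_sqr /grad_hinge dotvNl dotvC dotvNl opprK.
  by rewrite dotvZl dotvC dotvZl mulrA -expr2 exprVn dotv_sum_mem.
rewrite (eq_unif_subset_expect _ _ _ _ _ grad_sqr).
rewrite unif_subset_expectZ unif_subset_expect_pairs 1?(andP b_range).2 //.
apply: pair_incl_combination_le => //; last exact: sum_dotv_scaled_cols_diag.
apply: le_trans (sum_dotv_scaled_cols X c c_le1) _.
by rewrite [n%:R ^+ 2]expr2 -mulrA ler_wpM2l ?ler0n // mulrC -ler_pdivrMr.
Qed.
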